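(* Let $q$ be an odd prime power, $f$ a planar function on $\mathbb F_{q^2}$, and $\kappa:\mathbb F_{q^2}\to\mathbb F_{q^2}$, $x\mapsto\bar x$, an additive map such that (a) $\kappa(\kappa(x))=x$ for all $x$; (b) $\overline{f(x)}=f(\bar x)$ for all $x$; (c) $\#\{y\in\mathbb F_{q^2}:y+\bar y=f(x+\bar x)\}=q$ for each $x\in\mathbb F_{q^2}$. Let $\rho$ map the points of $\Pi(f)$ to lines by $(x,y)\mapsto L_{\bar x,\bar y}$, $(a)\mapsto N_{\bar a}$ for $a\in\mathbb F_{q^2}$, $(\infty)\mapsto L_\infty$. Then $\rho$ is a bijection from points to lines, and together with the map sending each line $\rho(P)$ to $P$ it is a unitary polarity of $\Pi(f)$, whose set of absolute points is the unital \[\mathcal U:=\{(x,y)\in\mathbb F_{q^2}^2:y+\bar y=f(x+\bar x)\}\cup\{(\infty)\}.\]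
   Context: A function $f:\mathbb F_{q^2}\to\mathbb F_{q^2}$ is planar if for every $a\neq0$ the map $x\mapsto f(x+a)-f(x)$ is a bijection. For planar $f$, $\Pi(f)$ is the projective plane (of order $q^2$) with points $(x,y)\in\mathbb F_{q^2}^2$ and $(a)$ for $a\in\mathbb F_{q^2}\cup\{\infty\}$, lines $L_{a,b}=\{(x,f(x+a)-b):x\in\mathbb F_{q^2}\}\cup\{(a)\}$, $N_a=\{(a,y):y\in\mathbb F_{q^2}\}\cup\{(\infty)\}$ ($a,b\in\mathbb F_{q^2}$), $L_\infty=\{(a):a\in\mathbb F_{q^2}\cup\{\infty\}\}$. A polarity is a bijection of points onto lines and lines onto points, of order two, preserving incidence (P on $\ell$ iff $\rho(\ell)$ on $\rho(P)$). A point $P$ is absolute if $P\in\rho(P)$; a polarity of a plane of order $q^2$ is unitary if it has exactly $q^3+1$ absolute points. A unital is a set of $q^3+1$ points meeting every line in $1$ or $q+1$ points. *)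

From mathcomp Require Import all_boot all_order all_algebra all_field.
Set Implicit Arguments. Unset Strict Implicit. Unset Printing Implicit Defensive.
Import GRing.Theory.
Local Open Scope ring_scope.

(* Points:  inl (x, y)    = affine point (x, y)
            inr (Some a)  = point (a),  a in F
            inr None      = point (infinity)
   Lines:   inl (a, b)    = L_{a,b}
            inr (Some a)  = N_a
            inr None      = L_infinity *)
Definition pt (F : finFieldType) := ((F * F) + option F)%type.
Definition ln (F : finFieldType) := ((F * F) + option F)%type.

Definition planar (F : finFieldType) (f : F -> F) : Prop :=
  forall a : F, a != 0 -> bijective (fun x => f (x + a) - f x).

Definition incid (F : finFieldType) (f : F -> F) (P : pt F) (l : ln F) : bool :=
  match P, l with
  | inl (x, y), inl (a, b) => y == f (x + a) - b
  | inl (x, _), inr (Some a) => x == a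
  | inl _, inr None => false
  | inr (Some a), inl (a', _) => a == a'
  | inr (Some _), inr (Some _) => false
  | inr (Some _), inr None => true
  | inr None, inl _ => false
  | inr None, inr _ => true
  end.

Definition is_polarity (F : finFieldType) (f : F -> F)
  (rho : pt F -> ln F) (sigma : ln F -> pt F) : Prop :=
  cancel rho sigma /\ cancel sigma rho /\
  forall (P : pt F) (l : ln F), incid f P l = incid f (sigma l) (rho P).

Definition absolute_points (F : finFieldType) (f : F -> F)
  (rho : pt F -> ln F) : {set pt F} := [set P | incid f P (rho P)].

Definition is_unital (F : finFieldType) (f : F -> F) (q : nat) (U : {set pt F}) : Prop :=
  #|U| = (q ^ 3 + 1)%N /\
  forall l : ln F, #|[set P in U | incid f P l]| \in [:: 1%N; q.+1].

Definition rho_kappa (F : finFieldType) (kappa : F -> F) (P : pt F) : ln F :=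
  match P with
  | inl (x, y) => inl (kappa x, kappa y)
  | inr (Some a) => inr (Some (kappa a))
  | inr None => inr None
  end.

Definition U_kappa (F : finFieldType) (f kappa : F -> F) : {set pt F} :=
  [set P : pt F | match P with
                  | inl (x, y) => y + kappa y == f (x + kappa x)
                  | inr None => true
                  | inr (Some _) => false
                  end].

From mathcomp Require Import all_boot all_order all_algebra all_field.
From mathcomp Require Import zify ring.
Import GRing.Theory.
Local Open Scope ring_scope.
Set Implicit Arguments. Unset Strict Implicit. Unset Printing Implicit Defensive.

(* Applying kappa shows that an affine point p lies on the polar line of p' iff
   p' lies on the polar line of p; hence rho is a polarity, and an absolute
   point p is the only point of U on its polar line, since a second one p'
   would give the polar lines of p and p' two common points.  Let c(L) be the
   number of affine points of U on the affine line L.  Since two points with distinct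
   abscissae lie on exactly one affine line, double counting gives
   sum c = q^5 and sum c^2 = q^6 + q^5 - q^4 over the q^4 affine lines.  The
   q^3 tangent lines have c = 1, so on the remaining q^4 - q^3 lines c has mean
   q + 1 and variance 0. *)

Lemma sum_nat_pred1 (T : finType) (P : pred T) (i0 : T) :
  P =1 pred1 i0 -> (\sum_i (P i : nat) = 1)%N.
Proof.
move=> P_i0; rewrite (bigD1 i0) //= P_i0 /= eqxx big1 // => i.
by rewrite P_i0 /= => /negbTE ->.
Qed.

Lemma sum_pair (T1 T2 : finType) (G : T1 * T2 -> nat) :
  (\sum_p G p = \sum_a \sum_b G (a, b))%N.
Proof. by rewrite pair_bigA; apply: eq_bigr => -[]. Qed.

Lemma sum_option (T : finType) (G : option T -> nat) :
  (\sum_o G o = G None + \sum_a G (Some a))%N.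
Proof.
rewrite (bigD1 None) //=; congr (_ + _)%N.
rewrite (reindex_omap Some id) /=; first by apply: eq_bigl => a; rewrite eqxx.
by case.
Qed.

Lemma eq_const_of_moments (I : finType) (P : pred I) (c : I -> nat) (m N X Y : nat) :
  (\sum_(i | P i) 1 = N)%N -> (\sum_(i | P i) c i = X)%N ->
  (\sum_(i | P i) c i ^ 2 = Y)%N -> (N * m ^ 2 + Y = 2 * m * X)%N ->
  forall i, P i -> c i = m.
Proof.
move=> sumN sumX sumY moments i Pi.
have sum_scaled a : (\sum_(j | P j) a * c j = a * X)%N by rewrite -sumX big_distrr.
have sum_const : (\sum_(j | P j) m ^ 2 = N * m ^ 2)%N.
  by rewrite -sumN big_distrl /=; apply: eq_bigr => j _; rewrite mul1n.
have [_] := leqif_sum (fun j (_ : P j) => nat_AGM2 m (c j)).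
rewrite (eq_bigr (fun j => 4 * m * c j)%N) => [|j _]; last by rewrite mulnA.
rewrite [X in _ == X](eq_bigr (fun j => m ^ 2 + c j ^ 2 + 2 * m * c j)%N) => [|j _]; last first.
  by rewrite sqrnD mulnA.
rewrite !big_split /= sum_const !sum_scaled sumY moments.
have -> : (2 * m * X + 2 * m * X = 4 * m * X)%N by ring.
by rewrite eqxx => /esym/forall_inP/(_ i Pi)/eqP.
Qed.

Lemma card_pt_set (F : finFieldType) (S : {set pt F}) :
  #|S| = (\sum_p (inl p \in S : nat)
          + ((inr None \in S : nat) + \sum_a (inr (Some a) \in S : nat)))%N.
Proof. by rewrite -sum1_card big_mkcond big_sumType sum_option. Qed.

Lemma eq_sub_swap (V : zmodType) (y c b : V) : (y == c - b) = (b == c - y).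
Proof. by rewrite eq_sym subr_eq [RHS]eq_sym subr_eq addrC. Qed.

Section AffineLines.

Variables (F : finFieldType) (f : F -> F).

Definition on_line (l p : F * F) : bool := p.2 == f (p.1 + l.1) - l.2.

Lemma incid_inl p l : incid f (inl p) (inl l) = on_line l p.
Proof. by case: p l => [x y] [a b]. Qed.

Lemma sum_on_line p : (\sum_l (on_line l p : nat) = #|F|)%N.
Proof.
rewrite sum_pair -[RHS]muln1 -sum_nat_const; apply: eq_bigr => a _.
apply: (sum_nat_pred1 (i0 := f (p.1 + a) - p.2)) => b /=.
by rewrite /on_line /= eq_sub_swap.
Qed.

Lemma on_line_vertical l p p' :
  p.1 = p'.1 -> on_line l p -> on_line l p' -> p = p'.
Proof. by case: p p' => [x y] [x' y']; rewrite /on_line /= => <- /eqP -> /eqP ->. Qed.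

Hypothesis planar_f : planar f.

Lemma on_line_unique l l' p p' : p.1 != p'.1 ->
  on_line l p -> on_line l p' -> on_line l' p -> on_line l' p' -> l = l'.
Proof.
case: p p' => [x y] [x' y'] /=; rewrite -subr_eq0 => dx_neq0.
have [g DgK _] := planar_f dx_neq0.
have slope a b : on_line (a, b) (x, y) -> on_line (a, b) (x', y') ->
    f (x' + a + (x - x')) - f (x' + a) = y - y'.
  rewrite /on_line /= => /eqP -> /eqP ->.
  by rewrite opprB subrKA; congr (f _ - _); ring.
case: l l' => [a b] [a' b'] la la' l'a l'a'.
have ea : a = a'.
  apply: (addrI x'); apply: (can_inj DgK).
  by rewrite (slope _ _ la la') (slope _ _ l'a l'a').
subst a'; congr (_, _); move: la l'a; rewrite /on_line /= => /eqP -> /eqP.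
by move/addrI/oppr_inj.
Qed.

Lemma on_line_exists p p' : p.1 != p'.1 -> exists l, on_line l p && on_line l p'.
Proof.
case: p p' => [x y] [x' y'] /=; rewrite -subr_eq0 => dx_neq0.
have [g _ gDK] := planar_f dx_neq0.
pose z := g (y - y').
have Dz : f (z + (x - x')) = y - y' + f z by rewrite -(gDK (y - y')) subrK.
exists (z - x', f z - y'); rewrite /on_line /=.
have -> : x + (z - x') = z + (x - x') by ring.
have -> : x' + (z - x') = z by ring.
by rewrite Dz; apply/andP; split; apply/eqP; ring.
Qed.

Lemma sum_on_line2 p p' :
  (\sum_l (on_line l p && on_line l p' : nat) = (p == p') * #|F| + (p.1 != p'.1))%N.
Proof.
have [<-|p_neq_p'] := eqVneq p p'.
  by rewrite eqxx mul1n addn0 -(sum_on_line p); apply: eq_bigr => l _; rewrite andbb.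
have [dx|dx] := eqVneq p.1 p'.1.
  rewrite big1 // => l _; apply/eqP; rewrite eqb0; apply/andP => -[lp lp'].
  by move: p_neq_p'; rewrite (on_line_vertical dx lp lp') eqxx.
have [l0 /andP[l0p l0p']] := on_line_exists dx.
apply: (sum_nat_pred1 (i0 := l0)) => l /=; apply/idP/eqP => [/andP[lp lp']|->].
  exact: on_line_unique dx lp lp' l0p l0p'.
by rewrite l0p l0p'.
Qed.

End AffineLines.

Section Conjugation.

Variables (F : finFieldType) (f kappa : F -> F).
Hypothesis kappaD : {morph kappa : x y / x + y}.
Hypothesis kappaK : involutive kappa.
Hypothesis kappa_f : {morph kappa : x / f x}.

Lemma kappaB x y : kappa (x - y) = kappa x - kappa y.
Proof. by apply: (addIr (kappa y)); rewrite -kappaD !subrK. Qed.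

Definition conj2 (p : F * F) : F * F := (kappa p.1, kappa p.2).

Lemma conj2K : involutive conj2.
Proof. by case=> x y; rewrite /conj2 /= !kappaK. Qed.

Definition in_unital (p : F * F) : bool := p.2 + kappa p.2 == f (p.1 + kappa p.1).

Lemma on_line_conj2C p p' : on_line f (conj2 p') p = on_line f (conj2 p) p'.
Proof.
case: p p' => [x y] [x' y']; rewrite /on_line /=.
rewrite -(inj_eq (can_inj kappaK)) kappaB kappa_f kappaD !kappaK.
by rewrite eq_sub_swap [kappa x + _]addrC.
Qed.

Lemma on_line_conj2_self p : on_line f (conj2 p) p = in_unital p.
Proof. by rewrite /on_line /in_unital eq_sym subr_eq eq_sym. Qed.

Lemma rho_kappaK : involutive (rho_kappa kappa).
Proof. by case=> [[x y]|[a|]] //=; rewrite !kappaK. Qed.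

Lemma incid_rho_kappa P l :
  incid f P l = incid f (rho_kappa kappa l) (rho_kappa kappa P).
Proof.
case: P => [[x y]|[c|]]; case: l => [[a b]|[d|]] //=.
- by have := on_line_conj2C (x, y) (kappa a, kappa b); rewrite /on_line /= !kappaK.
- by rewrite (inj_eq (can_inj kappaK)) eq_sym.
- by rewrite (inj_eq (can_inj kappaK)) eq_sym.
Qed.

Lemma is_polarity_rho_kappa sigma :
  cancel (rho_kappa kappa) sigma -> is_polarity f (rho_kappa kappa) sigma.
Proof.
move=> rhoK; have sigmaE l : sigma l = rho_kappa kappa l.
  by rewrite -{1}(rho_kappaK l) rhoK.
split=> //; split=> [l|P l]; rewrite sigmaE; [exact: rho_kappaK | exact: incid_rho_kappa].
Qed.

Lemma absolute_points_rho_kappa :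
  absolute_points f (rho_kappa kappa) = U_kappa f kappa.
Proof.
apply/setP => -[[x y]|[a|]]; rewrite !inE; [exact: (on_line_conj2_self (x, y)) | by [] | by []].
Qed.

Variable q : nat.
Hypothesis card_fiber : forall x, #|[set y | y + kappa y == f (x + kappa x)]| = q.

Lemma sum_unital_column x : (\sum_y (in_unital (x, y) : nat) = q)%N.
Proof.
by rewrite -(card_fiber x) -sum1_card [RHS]big_mkcond; apply: eq_bigr => y _; rewrite inE.
Qed.

Lemma sum_unital_fiber x : (\sum_p (in_unital p && (p.1 == x) : nat) = q)%N.
Proof.
rewrite sum_pair (bigD1 x) //= [X in (_ + X)%N]big1 => [|a /negbTE a_neq_x].
  by rewrite addn0 -(sum_unital_column x); apply: eq_bigr => y _; rewrite eqxx andbT.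
by rewrite big1 // => b _; rewrite a_neq_x andbF.
Qed.

Lemma sum_unital : (\sum_p (in_unital p : nat) = q * #|F|)%N.
Proof.
by rewrite sum_pair mulnC -sum_nat_const; apply: eq_bigr => x _; rewrite sum_unital_column.
Qed.

Definition unital_count l := (\sum_p (in_unital p && on_line f l p : nat))%N.

Lemma sum_unital_count : (\sum_l unital_count l = q * #|F| * #|F|)%N.
Proof.
rewrite exchange_big -sum_unital big_distrl /=; apply: eq_bigr => p _.
by rewrite -(sum_on_line f p) big_distrr /=; apply: eq_bigr => l _; rewrite mulnb.
Qed.

Lemma sum_unital_off_column (p : F * F) :
  (\sum_p' (in_unital p' && (p.1 != p'.1) : nat) + q = q * #|F|)%N.
Proof.
rewrite -sum_unital -(sum_unital_fiber p.1) -big_split /=; apply: eq_bigr => p' _.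
by rewrite eq_sym; case: (in_unital p'); case: (p'.1 == p.1).
Qed.

Lemma card_U_kappa : #|U_kappa f kappa| = (q * #|F|).+1.
Proof.
rewrite card_pt_set [X in (_ + (_ + X))%N]big1 => [|a _]; last by rewrite inE.
rewrite inE addn0 addn1 -sum_unital; congr _.+1.
by apply: eq_bigr => -[x y] _; rewrite inE.
Qed.

Hypothesis planar_f : planar f.

Lemma sum_unital_count_sqr :
  (\sum_l unital_count l ^ 2 + q * (q * #|F|) = q * #|F| * (#|F| + q * #|F|))%N.
Proof.
have pair_count p p' : (\sum_l (in_unital p && on_line f l p) * (in_unital p' && on_line f l p')
    = (in_unital p && in_unital p') * ((p == p') * #|F| + (p.1 != p'.1)))%N.
  rewrite -(sum_on_line2 planar_f) big_distrr /=.
  by apply: eq_bigr => l _; rewrite !mulnb andbACA.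
have row p : (\sum_p' (in_unital p && in_unital p') * ((p == p') * #|F| + (p.1 != p'.1))
    + in_unital p * q = in_unital p * (#|F| + q * #|F|))%N.
  have [Up|_] := boolP (in_unital p); last by rewrite big1.
  rewrite !mul1n -(sum_unital_off_column p) addnA; congr (_ + _)%N.
  under eq_bigr do rewrite mulnDr.
  rewrite big_split /= (bigD1 p) //= eqxx Up mul1n big1 => [|p' /negbTE p'_neq_p].
    by rewrite addn0 mul1n; congr (_ + _)%N; apply: eq_bigr => p' _; rewrite mulnb.
  by rewrite eq_sym p'_neq_p muln0.
rewrite /unital_count.
under eq_bigr do rewrite -mulnn big_distrl /=.
under eq_bigr do under eq_bigr do rewrite big_distrr /=.
rewrite exchange_big /=; under eq_bigr do rewrite exchange_big /=.
under eq_bigr do under eq_bigr do rewrite pair_count.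
have -> : (q * (q * #|F|) = \sum_p in_unital p * q)%N by rewrite -big_distrl sum_unital mulnC.
have -> : (q * #|F| * (#|F| + q * #|F|) = \sum_p in_unital p * (#|F| + q * #|F|))%N.
  by rewrite -big_distrl sum_unital.
by rewrite -big_split; apply: eq_bigr => p _; exact: row.
Qed.

Lemma unital_count_tangent p : in_unital p -> unital_count (conj2 p) = 1%N.
Proof.
move=> Up; apply: (sum_nat_pred1 (i0 := p)) => p' /=.
apply/andP/eqP => [[Up' p'_on]|->]; last by rewrite on_line_conj2_self Up.
have [dx|dx] := eqVneq p'.1 p.1.
  by apply: (on_line_vertical dx p'_on); rewrite on_line_conj2_self.
apply: (can_inj conj2K); apply: (on_line_unique planar_f dx);
  by rewrite ?on_line_conj2_self // on_line_conj2C.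
Qed.

Hypothesis card_F : #|F| = (q ^ 2)%N.

Lemma unital_count_secant l : ~~ in_unital (conj2 l) -> unital_count l = q.+1.
Proof.
pose tangent l := in_unital (conj2 l).
have card_tangent : (\sum_l (tangent l : nat) = q * #|F|)%N.
  by rewrite -sum_unital [RHS](reindex_inj (can_inj conj2K)).
have sum_split G : (\sum_l G (unital_count l) =
    q * #|F| * G 1%N + \sum_(l | ~~ tangent l) G (unital_count l))%N.
  rewrite (bigID tangent) /= -card_tangent big_distrl big_mkcond /=; congr (_ + _)%N.
  apply: eq_bigr => l' _; case: ifP => // tangent_l'.
  by rewrite -[l']conj2K unital_count_tangent ?mul1n.
apply: (eq_const_of_moments (P := fun l => ~~ tangent l) (m := q.+1) erefl erefl erefl).
move: sum_unital_count sum_unital_count_sqr (sum_split (fun=> 1%N)).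
rewrite (sum_split id) (sum_split (fun c => c ^ 2)%N) sum_nat_const card_prod card_F.
rewrite !expnS expn0; nia.
Qed.

Lemma is_unital_U_kappa : is_unital f q (U_kappa f kappa).
Proof.
split; first by rewrite card_U_kappa card_F -expnS addn1.
move=> l; rewrite card_pt_set [X in (_ + (_ + X))%N]big1 => [|a _]; last by rewrite !inE.
rewrite addn0 !inE /=; case: l => [l|[a|]].
- have -> : (\sum_p (inl p \in [set P in U_kappa f kappa | incid f P (inl l)] : nat)
      = unital_count l)%N.
    by apply: eq_bigr => -[x y] _; rewrite !inE incid_inl.
  have [tangent_l|secant_l] := boolP (in_unital (conj2 l)).
    by rewrite -[l]conj2K unital_count_tangent.
  by rewrite unital_count_secant // addn0 eqxx orbT.
- have -> : (\sum_p (inl p \in [set P in U_kappa f kappa | incid f P (inr (Some a))] : nat)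
      = q)%N.
    by rewrite -(sum_unital_fiber a); apply: eq_bigr => -[x y] _; rewrite !inE.
  by rewrite addn1 eqxx orbT.
- by rewrite big1 // => -[x y] _; rewrite !inE andbF.
Qed.

End Conjugation.

Theorem lemma4p1 (q : nat) (F : finFieldType) (f kappa : F -> F) :
  (exists p k : nat, [/\ prime p, (0 < k)%N & q = (p ^ k)%N]) ->
  odd q ->
  #|F| = (q ^ 2)%N ->
  planar f ->
  (forall x y : F, kappa (x + y) = kappa x + kappa y) ->
  (forall x : F, kappa (kappa x) = x) ->
  (forall x : F, kappa (f x) = f (kappa x)) ->
  (forall x : F, #|[set y : F | y + kappa y == f (x + kappa x)]| = q) ->
  bijective (rho_kappa kappa) /\
  (forall sigma : ln F -> pt F, cancel (rho_kappa kappa) sigma ->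
     is_polarity f (rho_kappa kappa) sigma) /\
  #|absolute_points f (rho_kappa kappa)| = (q ^ 3 + 1)%N /\
  absolute_points f (rho_kappa kappa) = U_kappa f kappa /\
  is_unital f q (U_kappa f kappa).
Proof.
move=> _ _ card_F planar_f kappaD kappaK kappa_f card_fiber.
have absE : absolute_points f (rho_kappa kappa) = U_kappa f kappa.
  exact: absolute_points_rho_kappa.
split; first exact: inv_bij (rho_kappaK kappaK).
split; first exact: is_polarity_rho_kappa.
split; first by rewrite absE (card_U_kappa card_fiber) card_F -expnS addn1.
by split; last exact: is_unital_U_kappa.
Qed.
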